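(* For $n\ge 1$ let $\bm{N}=(1,1,\ldots,1,-n)\in\mathbb{Z}^{n+1}$ and $c_n:=K_n(\bm{N})$. Then, as $n\to\infty$, \[ \log c_n \;\geq\; \frac{n}{4}\log^2 n - O(n\log n). \] Furthermore, $c_n \geq (n+1)^{n-1}$ for all $n\geq 3000$.
   Context: For an integer $n\ge1$ and $\bm{N}=(N_0,\ldots,N_{n-1},N_n)\in\mathbb{Z}^{n+1}$ with $N_n=-\sum_{i<n}N_i$, the flow polytope $\mathcal{F}_n(\bm{N})$ is the set of $\bm{f}=(f_{ij})_{0\le i<j\le n}\in\mathbb{R}_{\ge0}^{\binom{n+1}{2}}$ such that for each vertex $i\in\{0,\ldots,n\}$, $\sum_{j>i} f_{ij}-\sum_{k<i} f_{ki}=N_i$ (flows on the complete directed acyclic graph on $\{0,\ldots,n\}$ with edges $i\to j$ for $i<j$). $K_n(\bm{N})$ denotes the number of integer points of $\mathcal{F}_n(\bm{N})$ (the Kostant partition function). $\log$ is the natural logarithm. *)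

From mathcomp Require Import all_boot all_order all_algebra.
Set Implicit Arguments. Unset Strict Implicit. Unset Printing Implicit Defensive.
Import GRing.Theory Num.Theory.

(* A bound on every edge value of an integer flow with netflow vector N:
   by path decomposition of flows on a DAG, every f_ij <= sum of positive N_i
   <= sum_i |N_i|.  So enumerating flows with values in 'I_(flow_bound N).+1
   enumerates ALL integer points of the flow polytope. *)
Definition flow_bound (n : nat) (N : 'I_n.+1 -> int) : nat :=
  (\sum_(i < n.+1) `|N i|)%N.

(* f is an integer point of F_n(N): f_ij = 0 unless i < j (nonnegativity is
   built into nat), and for each vertex i:
   sum_{j>i} f_ij - sum_{k<i} f_ki = N_i. *)
Definition is_int_flow (n : nat) (N : 'I_n.+1 -> int)
    (f : {ffun 'I_n.+1 * 'I_n.+1 -> 'I_(flow_bound N).+1}) : bool :=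
  [forall i : 'I_n.+1, forall j : 'I_n.+1, (j <= i)%N ==> (nat_of_ord (f (i, j)) == 0%N)]
  && [forall i : 'I_n.+1,
        ((\sum_(j < n.+1 | (i < j)%N) (nat_of_ord (f (i, j))))%:Z
         - (\sum_(k < n.+1 | (k < i)%N) (nat_of_ord (f (k, i))))%:Z == N i)%R].

Definition K (n : nat) (N : 'I_n.+1 -> int) : nat :=
  #|[set f | @is_int_flow n N f]|.

Definition Nvec (n : nat) (i : 'I_n.+1) : int :=
  if nat_of_ord i == n then (- (n%:Z))%R else 1%R.

Definition c (n : nat) : nat := @K n (@Nvec n).

(* Start from the flow in which every vertex sends its unit straight along the
   path 0 -> 1 -> ... -> n, so that the edge (x-1, x) carries x.  A set S of
   chords (i, j) with j >= i + 2 can be superimposed with flow 1 each, the path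
   edges they bypass losing one unit per chord; this stays nonnegative as long
   as at most x chords of S span the edge (x-1, x).  Distinct S give distinct
   flows, so c_n >= 2^|P| for every such family P.  All chords of length
   2, ..., w+1 starting in a window of n - w(w+2) vertices placed after the
   first w(w+1) ones form such a family, whence c_n >= 2^(w(n - w(w+2))), and
   c_n^2 >= 2^(wn) when 2w(w+2) <= n.  With l = floor(log_2 n), the choice
   w = l^2 gives log c_n >= (n/2) l^2 log 2 >= (n/4) log^2 n, and the choice
   w = 2(l+1) gives c_n >= (n+1)^(n-1). *)

From Stdlib Require Import Reals Lra Lia.
From mathcomp Require all_boot all_algebra zify.

Module ChordFlows.
Import all_boot all_algebra zify.
Set Implicit Arguments. Unset Strict Implicit.

Lemma sum_window_le m u v : \sum_(a < m) (a <= u < a + v) <= v.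
Proof.
suff : \sum_(a < m) (a <= u < a + v) <= minn v (m - (u.+1 - v)) by lia.
elim: m => [|m IH]; first by rewrite big_ord0.
rewrite big_ord_recr /=; move: IH; set s := \sum_(_ < m) _ => IH.
case: (boolP (m <= u < m + v)) => [/andP[? ?]|_] /=; lia.
Qed.

Lemma sum_mem_pairl (T U : finType) (A : {set T * U}) (t : T) :
  \sum_(u : U) ((t, u) \in A) = \sum_(e in A) (e.1 == t).
Proof.
transitivity (\sum_(x : T) \sum_(u : U) (if (x, u) \in A then nat_of_bool (x == t) else 0)).
  rewrite (bigD1 t) //= [X in _ + X]big1 ?addn0 => [|x /negbTE neq_xt].
    by apply: eq_bigr => u _; rewrite eqxx; case: (_ \in A).
  by apply: big1 => u _; rewrite neq_xt if_same.
by rewrite pair_bigA [RHS]big_mkcond; apply: eq_bigr => -[x u].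
Qed.

Lemma sum_mem_pairr (T U : finType) (A : {set T * U}) (u : U) :
  \sum_(t : T) ((t, u) \in A) = \sum_(e in A) (e.2 == u).
Proof.
transitivity (\sum_(t : T) \sum_(y : U) (if (t, y) \in A then nat_of_bool (y == u) else 0)).
  apply: eq_bigr => t _; rewrite (bigD1 u) //= big1 ?addn0 => [|y /negbTE neq_yu].
    by rewrite eqxx; case: (_ \in A).
  by rewrite neq_yu if_same.
by rewrite pair_bigA [RHS]big_mkcond; apply: eq_bigr => -[x y].
Qed.

Lemma flow_bound_Nvec n : n <= flow_bound (@Nvec n).
Proof. by rewrite /flow_bound big_ord_recr /= /Nvec /= eqxx abszN absz_nat leq_addl. Qed.

Section ChordFlow.
Variable n : nat.
Local Notation V := 'I_n.+1.
Implicit Types (S P : {set V * V}) (i j : V).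

Definition chord_span S (x : nat) : nat := \sum_(e in S) (e.1 < x <= e.2).

Definition chord_flow S i j : nat :=
  (if j == i.+1 :> nat then j - chord_span S j else 0) + ((i, j) \in S).

Definition chord_flow_fun S : {ffun V * V -> 'I_(flow_bound (@Nvec n)).+1} :=
  [ffun e => inord (chord_flow S e.1 e.2)].

Lemma chord_flow_chord S i j : i.+1 < j -> chord_flow S i j = ((i, j) \in S).
Proof. by move=> lt_ij; rewrite /chord_flow ifN_eq //; apply/eqP; lia. Qed.

Section OneSet.
Variable S : {set V * V}.
Hypothesis S_long : forall e, e \in S -> e.1.+1 < e.2.
Hypothesis S_span : forall x, chord_span S x <= x.

Lemma chord_flow_le i j : chord_flow S i j <= j.
Proof.
rewrite /chord_flow; case: (boolP ((i, j) \in S)) => [/S_long /= lt_ij | _].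
  by rewrite ifN_eq ?addn1 //; apply/eqP; lia.
by case: eqP => _; rewrite addn0 ?leq_subr.
Qed.

Lemma chord_flow_eq0 i j : j <= i -> chord_flow S i j = 0.
Proof.
move=> le_ji; rewrite /chord_flow ifN_eq; last by apply/eqP; lia.
by case: (boolP ((i, j) \in S)) => // /S_long /=; lia.
Qed.

Lemma chord_flow_funE e : chord_flow_fun S e = chord_flow S e.1 e.2 :> nat.
Proof.
rewrite ffunE inordK // ltnS; apply: leq_trans (chord_flow_le _ _) _.
by apply: leq_trans (flow_bound_Nvec n); rewrite -ltnS.
Qed.

Lemma chord_span_step x :
  chord_span S x.+1 + \sum_(e in S) (e.2 == x :> nat)
  = chord_span S x + \sum_(e in S) (e.1 == x :> nat).
Proof. by rewrite -!big_split; apply: eq_bigr => e /S_long /=; lia. Qed.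

Lemma chord_span_last : chord_span S n.+1 = 0.
Proof. by rewrite /chord_span big1 // => e _; have := ltn_ord e.2; lia. Qed.

Lemma chord_outflow i :
  \sum_(j < n.+1 | i < j) chord_flow S i j
  = (if i < n then i.+1 - chord_span S i.+1 else 0) + \sum_(e in S) (e.1 == i :> nat).
Proof.
rewrite big_mkcond /= (eq_bigr (chord_flow S i)); last first.
  by move=> j _; case: ltnP => // le_ji; rewrite chord_flow_eq0.
rewrite big_split /= sum_mem_pairl; congr (_ + _).
rewrite -(big_mkcond (fun j : V => j == i.+1 :> nat)).
by rewrite (big_ord1_eq _ (fun x => x - chord_span S x)) ltnS.
Qed.

Lemma chord_inflow i :
  \sum_(k < n.+1 | k < i) chord_flow S k i = i - chord_span S i + \sum_(e in S) (e.2 == i :> nat).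
Proof.
rewrite big_mkcond /= (eq_bigr (chord_flow S ^~ i)); last first.
  by move=> k _; case: ltnP => // le_ik; rewrite chord_flow_eq0.
rewrite big_split /= sum_mem_pairr; congr (_ + _).
case: (posnP i) => [i0 | i_gt0].
  by rewrite i0 sub0n big1 // => k _; case: ifP.
rewrite (eq_bigr (fun k : V => if k == i.-1 :> nat then i - chord_span S i else 0)); last first.
  by move=> k _; have -> : (i == k.+1 :> nat) = (k == i.-1 :> nat) by lia.
rewrite -(big_mkcond (fun k : V => k == i.-1 :> nat)).
by rewrite (big_ord1_eq _ (fun _ => i - chord_span S i)) ifT //; have := ltn_ord i; lia.
Qed.

Lemma chord_flow_fun_is_flow : is_int_flow (chord_flow_fun S).
Proof.
apply/andP; split.
  apply/forallP => i; apply/forallP => j; apply/implyP => le_ji.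
  by rewrite chord_flow_funE chord_flow_eq0.
apply/forallP => i.
under eq_bigr do rewrite chord_flow_funE.
under [X in (_ - X%:Z)%R]eq_bigr do rewrite chord_flow_funE.
rewrite /= chord_outflow chord_inflow /Nvec.
have := chord_span_step i; have := S_span i; have := S_span i.+1.
case: (ltngtP i n) => [lt_in | | eq_in].
- by move=> *; apply/eqP; lia.
- by move=> lt_ni; have := ltn_ord i; rewrite ltnS leqNgt lt_ni.
- by rewrite eq_in chord_span_last => *; apply/eqP; lia.
Qed.

End OneSet.

Lemma chord_span_sub S P x : S \subset P -> chord_span S x <= chord_span P x.
Proof.
move=> sSP; rewrite /chord_span [X in X <= _]big_mkcond [X in _ <= X]big_mkcond /=.
by apply: leq_sum => e _; case: ifP => // /(subsetP sSP) ->.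
Qed.

Lemma chord_flow_fun_inj P : (forall e, e \in P -> e.1.+1 < e.2) ->
  {in powerset P &, injective chord_flow_fun}.
Proof.
move=> P_long S1 S2; rewrite !inE => sub1 sub2 eq_flow; apply/setP => e.
have [eP | eNP] := boolP (e \in P); last first.
  by rewrite (contraNF (subsetP sub1 e)) // (contraNF (subsetP sub2 e)).
have long_sub S : S \subset P -> forall e, e \in S -> e.1.+1 < e.2.
  by move=> sSP e' /(subsetP sSP)/P_long.
move/ffunP/(_ e)/(congr1 val): eq_flow => /=.
rewrite (chord_flow_funE (long_sub _ sub1)) (chord_flow_funE (long_sub _ sub2)).
rewrite !(chord_flow_chord _ (P_long _ eP)) -surjective_pairing.
by case: (e \in S1); case: (e \in S2).
Qed.

Lemma exp2_card_le_c P : (forall e, e \in P -> e.1.+1 < e.2) ->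
  (forall x, chord_span P x <= x) -> 2 ^ #|P| <= c n.
Proof.
move=> P_long P_span; rewrite -card_powerset -(card_in_imset (chord_flow_fun_inj P_long)).
apply: subset_leq_card; apply/subsetP => f /imsetP[S + ->]; rewrite powersetE => sSP.
rewrite inE; apply: chord_flow_fun_is_flow => [e /(subsetP sSP)/P_long // | x].
exact: leq_trans (chord_span_sub x sSP) (P_span x).
Qed.

End ChordFlow.

Section BandedChords.
Variables (n w : nat).
Hypothesis w_small : w * (w + 2) <= n.
Local Notation m := (n - w * (w + 2)).
Local Notation o := (w * w.+1).

Definition banded_chord (p : 'I_m * 'I_w) : 'I_n.+1 * 'I_n.+1 :=
  (inord (o + p.1), inord (o + p.1 + p.2.+2)).

Definition banded_chords := [set banded_chord p | p : 'I_m * 'I_w].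

Lemma banded_chord_fst p : (banded_chord p).1 = o + p.1 :> nat.
Proof. by rewrite inordK //; have := ltn_ord p.1; lia. Qed.

Lemma banded_chord_snd p : (banded_chord p).2 = o + p.1 + p.2.+2 :> nat.
Proof. by rewrite inordK //; have := ltn_ord p.1; have := ltn_ord p.2; lia. Qed.

Lemma banded_chord_inj : injective banded_chord.
Proof.
move=> [a d] [b f] eq_chord.
have eq1 : (banded_chord (a, d)).1 = (banded_chord (b, f)).1 :> nat by rewrite eq_chord.
have eq2 : (banded_chord (a, d)).2 = (banded_chord (b, f)).2 :> nat by rewrite eq_chord.
move: eq1 eq2; rewrite !banded_chord_fst !banded_chord_snd /= => eq1 eq2.
by congr (_, _); apply: val_inj => /=; lia.
Qed.

Lemma card_banded_chords : #|banded_chords| = m * w.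
Proof. by rewrite card_imset ?cardsT ?card_prod ?card_ord //; exact: banded_chord_inj. Qed.

Lemma banded_chords_long e : e \in banded_chords -> e.1.+1 < e.2.
Proof. by case/imsetP => p _ ->; rewrite banded_chord_fst banded_chord_snd; lia. Qed.

Lemma banded_chords_span x : chord_span banded_chords x <= x.
Proof.
rewrite /chord_span big_imset; last by move=> p q _ _; apply: banded_chord_inj.
have [le_xo | lt_ox] := leqP x o.
  by rewrite big1 // => p _; rewrite banded_chord_fst; lia.
apply: leq_trans (ltnW lt_ox).
apply: (@leq_trans (\sum_(p : 'I_m * 'I_w) (p.1 <= x - o.+1 < p.1 + w.+1))).
  apply: leq_sum => -[a d] _; rewrite banded_chord_fst banded_chord_snd /=.
  case/boolP: (_ < x <= _) => //= /andP[lo hi].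
  by rewrite lt0b; have lt_dw := ltn_ord d; apply/andP; split; lia.
rewrite -(pair_bigA _ (fun (a : 'I_m) (_ : 'I_w) => nat_of_bool (a <= x - o.+1 < a + w.+1))) /=.
under eq_bigr do rewrite sum_nat_const card_ord.
by rewrite -big_distrr leq_mul2l sum_window_le orbT.
Qed.

End BandedChords.

Lemma exp2_le_c n w : w * (w + 2) <= n -> 2 ^ (w * (n - w * (w + 2))) <= c n.
Proof.
move=> w_small; rewrite mulnC -(card_banded_chords w_small).
exact: exp2_card_le_c (banded_chords_long w_small) (banded_chords_span w_small).
Qed.

Lemma exp2_le_c_sqr n w : 2 * (w * (w + 2)) <= n -> 2 ^ (w * n) <= c n ^ 2.
Proof.
move=> w_small; have le_c : 2 ^ (w * (n - w * (w + 2))) <= c n by apply: exp2_le_c; lia.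
apply: leq_trans (_ : (2 ^ (w * (n - w * (w + 2)))) ^ 2 <= _); last by rewrite leq_sqr.
by rewrite -expnM leq_pexp2l //; nia.
Qed.

Lemma exp2_dominates (p : nat -> nat) l0 :
  p l0 <= 2 ^ l0 -> (forall l, l0 <= l -> p l.+1 <= 2 * p l) ->
  forall l, l0 <= l -> p l <= 2 ^ l.
Proof.
move=> base step l /subnKC <-; elim: (l - l0) => [|k IH]; rewrite ?addn0 // addnS expnS.
by apply: leq_trans (step _ (leq_addr _ _)) _; rewrite leq_mul2l IH orbT.
Qed.

Lemma natpowE a b : Nat.pow a b = a ^ b.
Proof. by elim: b => //= b ->; rewrite expnS. Qed.

Lemma exp2_log_sqr_le_c_sqr n : (Nat.pow 2 18 <= n)%coq_nat ->
  exists l, (3 <= l)%coq_nat /\ (Nat.pow 2 l <= n)%coq_nat /\ (n < Nat.pow 2 l.+1)%coq_nat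
    /\ (Nat.pow 2 (l * l * n) <= c n * c n)%coq_nat.
Proof.
rewrite natpowE => /leP n_ge.
have n_gt0 : 0 < n by apply: leq_trans n_ge; rewrite expn_gt0.
have lo := trunc_logP (ltnSn 1) n_gt0; have hi := trunc_log_ltn n (ltnSn 1).
set l := trunc_log 2 n in lo hi *.
have l_ge : 18 <= l by rewrite -ltnS -(ltn_exp2l _ _ (ltnSn 1)); exact: leq_ltn_trans n_ge hi.
have poly : 2 * (l * l * (l * l + 2)) <= 2 ^ l.
  apply: (@exp2_dominates (fun k => 2 * (k * k * (k * k + 2))) 18) l_ge => [|k k_ge].
    by lia.
  by nia.
have c_ge := exp2_le_c_sqr (leq_trans poly lo).
exists l; rewrite !natpowE mulnn; repeat split; apply/leP => //; lia.
Qed.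

Lemma pow_succ_pred_le_c n : (3000 <= n)%coq_nat -> (Nat.pow (n + 1) (n - 1) <= c n)%coq_nat.
Proof.
move/leP => n_ge; rewrite natpowE; apply/leP.
have n_gt0 : 0 < n by lia.
have lo := trunc_logP (ltnSn 1) n_gt0; have hi := trunc_log_ltn n (ltnSn 1).
set l := trunc_log 2 n in lo hi *.
have l_ge : 11 <= l by rewrite -ltnS -(ltn_exp2l _ _ (ltnSn 1)); apply: leq_ltn_trans hi; lia.
have w_small : 2 * (2 * l.+1 * (2 * l.+1 + 2)) <= n.
  apply: leq_trans lo.
  apply: (@exp2_dominates (fun k => 2 * (2 * k.+1 * (2 * k.+1 + 2))) 11) l_ge => [|k k_ge].
    by lia.
  by nia.
rewrite -leq_sqr; apply: leq_trans (exp2_le_c_sqr w_small).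
rewrite -expnM (@leq_trans ((2 ^ l.+1) ^ ((n - 1) * 2))) //.
  by rewrite leq_exp2r ?muln_gt0; lia.
by rewrite -expnM leq_pexp2l //; nia.
Qed.

End ChordFlows.

Open Scope R_scope.

Lemma ln_le_ln x y : 0 < x -> x <= y -> ln x <= ln y.
Proof. intros x_pos [lt | ->]; [left; apply ln_increasing | right]; auto. Qed.

Lemma ln2_lt_1 : ln 2 < 1.
Proof.
rewrite <- (ln_exp 1); apply ln_increasing; [lra |].
pose proof (exp_ineq1 1 R1_neq_R0); lra.
Qed.

Lemma INR_exp2 k : INR (Nat.pow 2 k) = 2 ^ k.
Proof. now rewrite pow_INR. Qed.

Lemma exp2_le_ln_INR (E x : nat) : (Nat.pow 2 E <= x)%nat -> INR E * ln 2 <= ln (INR x).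
Proof.
intros le_x; rewrite <- ln_pow by lra; rewrite <- INR_exp2.
apply ln_le_ln, le_INR, le_x.
rewrite INR_exp2; apply pow_lt; lra.
Qed.

Lemma ln_INR_lt_exp2 (x k : nat) :
  (0 < x)%nat -> (x < Nat.pow 2 k)%nat -> ln (INR x) < INR k * ln 2.
Proof.
intros x_pos lt_x; rewrite <- ln_pow by lra; rewrite <- INR_exp2.
apply ln_increasing; [apply lt_0_INR | apply lt_INR]; assumption.
Qed.

Lemma quarter_n_ln_sqr_le (n l x : nat) : (3 <= l)%nat -> (Nat.pow 2 l <= n)%nat ->
  (n < Nat.pow 2 (S l))%nat -> (Nat.pow 2 (l * l * n) <= x * x)%nat ->
  INR n / 4 * ln (INR n) ^ 2 <= ln (INR x).
Proof.
intros l_ge n_ge n_lt x_ge.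
assert (n_pos : (0 < n)%nat) by (pose proof (Nat.pow_nonzero 2 l); lia).
assert (x_pos : (0 < x)%nat).
{ pose proof (Nat.pow_nonzero 2 (l * l * n)); destruct x; simpl in *; lia. }
pose proof (exp2_le_ln_INR _ _ n_ge) as ln_n_ge.
pose proof (ln_INR_lt_exp2 _ _ n_pos n_lt) as ln_n_lt.
pose proof (exp2_le_ln_INR _ _ x_ge) as ln_x_ge.
rewrite !mult_INR, ln_mult in ln_x_ge by (apply lt_0_INR; lia).
rewrite S_INR in ln_n_lt.
apply le_INR in l_ge; apply lt_0_INR in n_pos; simpl in l_ge.
pose proof ln2_lt_1; pose proof ln_lt_2.
set (a := ln (INR n)) in *; set (s := ln 2) in *; set (L := INR l) in *; set (N := INR n) in *.
assert (a_nonneg : 0 <= a) by nra.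
assert (a_sqr : a ^ 2 <= 2 * L * L * s).
{ assert (a * a <= (L + 1) * s * ((L + 1) * s)) by (apply Rmult_le_compat; lra).
  assert ((L + 1) * (L + 1) * s <= 2 * L * L) by nra.
  simpl; nra. }
assert (N * a ^ 2 <= N * (2 * L * L * s)) by (apply Rmult_le_compat_l; lra).
nra.
Qed.

Theorem theorem1p2 :
  (exists C : R, exists n0 : nat, forall n : nat, (n0 <= n)%nat ->
     ln (INR (c n)) >= INR n / 4 * (ln (INR n)) ^ 2 - C * INR n * ln (INR n))
  /\ (forall n : nat, (3000 <= n)%nat -> (Nat.pow (n + 1) (n - 1) <= c n)%nat).
Proof.
split.
- exists 0, (Nat.pow 2 18); intros n n_ge.
  destruct (ChordFlows.exp2_log_sqr_le_c_sqr n_ge) as (l & l_ge & n_lo & n_hi & c_ge).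
  pose proof (quarter_n_ln_sqr_le n l (c n) l_ge n_lo n_hi c_ge); lra.
- exact ChordFlows.pow_succ_pred_le_c.
Qed.
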